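(* Every total 3-order on a five-element set $V$ is realizable by a holey family: for every total 3-order $o$ on $V$, there exist compact convex sets $K_v$ ($v\in V$) in the plane forming a holey family such that $o(K_uK_vK_w)=o(uvw)$ for all distinct $u,v,w\in V$.
   Context: A total orientation on a set $V$ is a map $o$ from ordered triples of distinct elements of $V$ to $\{+1,-1\}$ with $o(uvw)=o(wuv)=o(vwu)=-o(uwv)=-o(vuw)=-o(wvu)$. It is a total 3-order if it satisfies the interiority condition: for all distinct $a,b,c,d$, $o(abd)=o(bcd)=o(cad)=1$ implies $o(abc)=1$. A family of compact convex sets in the plane is holey if any two members intersect and no three distinct members have a common point. For three members $A,B,C$ of a holey family, $o(ABC)=o(xyz)$ for any $x\in B\cap C$, $y\in A\cap C$, $z\in A\cap B$, where $o(xyz)=+1$ for a counterclockwise and $-1$ for a clockwise triangle (independent of the choice). *)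

From HB Require Import structures.
From mathcomp Require Import all_boot all_order all_algebra.
From mathcomp Require Import all_classical all_reals topology normedtype.
Set Implicit Arguments. Unset Strict Implicit. Unset Printing Implicit Defensive.
Import numFieldNormedType.Exports.
Import Order.TTheory GRing.Theory Num.Theory.
Local Open Scope ring_scope.
Local Open Scope classical_set_scope.

Definition distinct3 (V : eqType) (u v w : V) : Prop :=
  [/\ u != v, v != w & u != w].

(* A total orientation on V: values +1/-1 on ordered triples of distinct
   elements, with o(uvw)=o(wuv)=o(vwu)=-o(uwv)=-o(vuw)=-o(wvu).
   Values on non-distinct triples are irrelevant. *)
Definition total_orientation (V : eqType) (o : V -> V -> V -> int) : Prop :=
  forall u v w, distinct3 u v w ->
    (o u v w = 1 \/ o u v w = -1) /\
    [/\ o u v w = o w u v, o u v w = o v w u,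
        o u v w = - o u w v, o u v w = - o v u w & o u v w = - o w v u].

Definition total_3order (V : eqType) (o : V -> V -> V -> int) : Prop :=
  total_orientation o /\
  forall a b c d, distinct3 a b c -> a != d -> b != d -> c != d ->
    o a b d = 1 -> o b c d = 1 -> o c a d = 1 -> o a b c = 1.

Definition convex_plane (R : realType) (K : set (R * R)) : Prop :=
  forall x y, K x -> K y -> forall t : R, 0 <= t <= 1 ->
    K ((1 - t) * x.1 + t * y.1, (1 - t) * x.2 + t * y.2).

(* Orientation of the triangle xyz: +1 counterclockwise, -1 clockwise
   (0 if degenerate). *)
Definition orient (R : realType) (x y z : R * R) : int :=
  sgz ((y.1 - x.1) * (z.2 - x.2) - (y.2 - x.2) * (z.1 - x.1)).

Definition holey (R : realType) (V : eqType) (K : V -> set (R * R)) : Prop :=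
  [/\ forall v, compact (K v) /\ convex_plane (K v),
      forall u v, u != v -> K u `&` K v !=set0 &
      forall u v w, distinct3 u v w -> K u `&` K v `&` K w = set0].

(* o(K_u K_v K_w) = s: the orientation of x y z, for x in K_v & K_w,
   y in K_u & K_w, z in K_u & K_v (independent of the choice). *)
Definition family_orient_is (R : realType) (A B C : set (R * R)) (s : int) : Prop :=
  forall x y z, (B `&` C) x -> (A `&` C) y -> (A `&` B) z -> orient x y z = s.

From HB Require Import structures.
From mathcomp Require Import all_boot all_order all_algebra.
From mathcomp Require Import all_classical all_reals topology normedtype.
From Stdlib Require Import BinInt.
From mathcomp Require Import ssrZ zify ring lra.
Import numFieldNormedType.Exports.
Import Order.TTheory GRing.Theory Num.Theory.
Local Open Scope ring_scope.
Local Open Scope classical_set_scope.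
Set Implicit Arguments. Unset Strict Implicit. Unset Printing Implicit Defensive.

(* A total orientation of five points is determined by its ten signs on increasing
   triples. A finite computation shows that every sign vector satisfying the
   interiority condition is a relabelling of one of six vectors, and each of these six
   is realized by five convex polygons with integer data. The realizations are checked
   by certificates: each pair of polygons gets an explicit common point and a box
   containing their intersection, whose sides are nonnegative combinations of two edge
   constraints; for each triple, the orientation determinant has the prescribed sign at
   all corners of the three boxes, hence on their whole product, because it is affine
   in each vertex. This fixes the orientation of the triple and shows that no point
   lies in all three polygons. *)

(* Loading [BinInt] rebinds the [%N] delimiter; restore the ssrnat one. *)
Delimit Scope nat_scope with N.

(** * Sign vectors of orientations of five points *)

Section SignVectors.
Local Open Scope nat_scope.

Definition all5 (P : pred nat) : bool := all P (iota 0 5).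

Lemma all5P (P : pred nat) : reflect (forall a : 'I_5, P a) (all5 P).
Proof.
apply: (iffP allP) => [H a | H a]; first by apply: H; rewrite mem_iota ltn_ord.
by rewrite mem_iota => /= lt_a5; apply: (H (Ordinal lt_a5)).
Qed.

Lemma all5_triples (P : nat -> nat -> nat -> bool) :
  all5 (fun a => all5 (fun b => all5 (fun c => P a b c))) -> forall a b c : 'I_5, P a b c.
Proof. by move=> /all5P H a b c; move: (H a) => /all5P /(_ b) /all5P /(_ c). Qed.

Definition distinctb (a b c : nat) : bool := [&& a != b, b != c & a != c].

Lemma distinct3_ord (a b c : 'I_5) : distinct3 a b c <-> distinctb a b c.
Proof. by split=> [[ab bc ac] | /and3P[]]; first exact/and3P. Qed.

Definition sorted_triples : seq (nat * nat * nat) :=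
  [:: (0,1,2); (0,1,3); (0,1,4); (0,2,3); (0,2,4); (0,3,4); (1,2,3); (1,2,4); (1,3,4); (2,3,4)].

(* The boolean records whether the sorting permutation is odd. *)
Definition sort3 (a b c : nat) : (nat * nat * nat) * bool :=
  if a < b then
    if b < c then ((a, b, c), false)
    else if a < c then ((a, c, b), true) else ((c, a, b), false)
  else if a < c then ((b, a, c), true)
  else if b < c then ((b, c, a), false) else ((c, b, a), true).

Lemma sort3_sorted (a b c : 'I_5) : distinct3 a b c -> (sort3 a b c).1 \in sorted_triples.
Proof.
have sorted : all5 (fun a => all5 (fun b => all5 (fun c =>
  distinctb a b c ==> ((sort3 a b c).1 \in sorted_triples)))) by [].
by move=> /distinct3_ord abc; move/implyP: (all5_triples sorted a b c); apply.
Qed.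

Lemma sort3_perm (a b c : 'I_5) : distinct3 a b c ->
  let s := sort3 a b c in let s' := (s.1, ~~ s.2) in
  [/\ sort3 c a b = s, sort3 b c a = s, sort3 a c b = s', sort3 b a c = s' & sort3 c b a = s'].
Proof.
have perm : all5 (fun a => all5 (fun b => all5 (fun c => distinctb a b c ==>
  let s := sort3 a b c in let s' := (s.1, ~~ s.2) in
  [&& sort3 c a b == s, sort3 b c a == s, sort3 a c b == s', sort3 b a c == s'
    & sort3 c b a == s']))).
  by [].
move=> /distinct3_ord abc; move/implyP: (all5_triples perm a b c) => /(_ abc).
by case/and5P=> /eqP-> /eqP-> /eqP-> /eqP-> /eqP->.
Qed.

(* A sign vector lists the signs on [sorted_triples]; [bits_pos] extends it to all
   triples of distinct points by alternation. *)
Definition bits_pos (bs : seq bool) (a b c : nat) : bool :=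
  let: (t, odd) := sort3 a b c in xorb odd (nth false bs (index t sorted_triples)).

Definition bits_of (g : nat -> nat -> nat -> bool) : seq bool :=
  [seq g t.1.1 t.1.2 t.2 | t <- sorted_triples].

Definition alternating (g : nat -> nat -> nat -> bool) : Prop :=
  forall a b c : 'I_5, distinct3 a b c ->
    [/\ g a b c = g c a b, g a b c = g b c a, g a b c = ~~ g a c b,
        g a b c = ~~ g b a c & g a b c = ~~ g c b a].

Lemma alternating_sort3 g (a b c : 'I_5) : alternating g -> distinct3 a b c ->
  let: (t, odd) := sort3 a b c in g a b c = xorb odd (g t.1.1 t.1.2 t.2).
Proof.
move=> g_alt /g_alt[gC1 gC2 gS1 gS2 gS3]; rewrite /sort3.
by case: ifP => _; [case: ifP => _; [|case: ifP => _] | case: ifP => _; [|case: ifP => _]].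
Qed.

Lemma bits_pos_bits_of g (a b c : 'I_5) : alternating g -> distinct3 a b c ->
  bits_pos (bits_of g) a b c = g a b c.
Proof.
move=> g_alt abc; have := alternating_sort3 g_alt abc; have := sort3_sorted abc.
rewrite /bits_pos; case: (sort3 a b c) => t odd t_sorted ->.
by rewrite (nth_map (0, 0, 0)) ?index_mem // nth_index.
Qed.

Lemma bits_pos_alternating bs : alternating (bits_pos bs).
Proof.
move=> a b c /sort3_perm[E1 E2 E3 E4 E5]; rewrite /bits_pos E1 E2 E3 E4 E5.
by case: (sort3 a b c) => t [] /=; rewrite ?negbK.
Qed.

Definition interior_bits (bs : seq bool) : bool :=
  all5 (fun a => all5 (fun b => all5 (fun c => all5 (fun d =>
    [&& distinctb a b c, a != d, b != d & c != d] ==>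
    [&& bits_pos bs a b d, bits_pos bs b c d & bits_pos bs c a d] ==> bits_pos bs a b c)))).

Definition relabel (bs : seq bool) (s : seq nat) : seq bool :=
  bits_of (fun a b c => bits_pos bs (nth 0 s a) (nth 0 s b) (nth 0 s c)).

Definition orient_of_bits (bs : seq bool) (a b c : nat) : int :=
  (if bits_pos bs a b c then 1 else -1)%R.

Fixpoint bitseqs (n : nat) : seq (seq bool) :=
  if n is n'.+1 then [seq b :: s | b <- [:: true; false], s <- bitseqs n'] else [:: [::]].

Lemma mem_bitseqs (s : seq bool) : s \in bitseqs (size s).
Proof.
elim: s => [|b s IHs] //.
by apply/allpairsP; exists (b, s); split => //; case: b.
Qed.

End SignVectors.

(** * Certificates *)

(* [(a, b, t)] stands for the halfplane [a x + b y <= t], a [bounds] [(t1, t2, t3, t4)]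
   for the box [-t2 <= x <= t1, -t4 <= y <= t3]. A [polygon_class] lists five polygons
   (constraints to intersect with the square [[-M, M]^2]) and, for the pairs in
   [sorted_pairs], a common point, a box containing the intersection, and certificates
   for the four sides of that box. *)
Definition constraint := (Z * Z * Z)%type.
Definition bounds := (Z * Z * Z * Z)%type.
Definition certificate := (Z * Z * Z * Z * Z)%type.
Definition pair_data := ((Z * Z) * bounds * seq certificate)%type.
Definition polygon_class := (seq (seq constraint) * Z * seq pair_data)%type.

Definition sat (c : constraint) (w : Z * Z) : bool := c.1.1 * w.1 + c.1.2 * w.2 <= c.2.

Definition bound_constraints (bd : bounds) : seq constraint :=
  let: (t1, t2, t3, t4) := bd in [:: (1, 0, t1); (-1, 0, t2); (0, 1, t3); (0, -1, t4)].

(* [(i, j, l, m, k)] derives the constraint [k e] from [l c_i + m c_j], with [l, m >= 0]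
   and [k > 0]; [c_i] defaults to the trivial constraint [0 <= 0]. *)
Definition cert_ok (cs : seq constraint) (e : constraint) (ct : certificate) : bool :=
  let: (i, j, l, m, k) := ct in
  let ci := nth (0, 0, 0) cs (Z.to_nat i) in let cj := nth (0, 0, 0) cs (Z.to_nat j) in
  [&& 0 <= l, 0 <= m, 0 < k,
      l * ci.1.1 + m * cj.1.1 == k * e.1.1,
      l * ci.1.2 + m * cj.1.2 == k * e.1.2 &
      l * ci.2 + m * cj.2 <= k * e.2].

Definition pair_witness (pd : pair_data) : Z * Z := pd.1.1.
Definition pair_bounds (pd : pair_data) : bounds := pd.1.2.

Definition check_pair (cu cv : seq constraint) (M : Z) (pd : pair_data) : bool :=
  let sq := bound_constraints (M, M, M, M) in
  [&& all (sat^~ (pair_witness pd)) (sq ++ cu), all (sat^~ (pair_witness pd)) (sq ++ cv) &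
      all2 (cert_ok (cu ++ cv)) (bound_constraints (pair_bounds pd)) pd.2].

Definition corners (bd : bounds) : seq (Z * Z) :=
  let: (t1, t2, t3, t4) := bd in [:: (- t2, - t4); (- t2, t3); (t1, - t4); (t1, t3)].

Definition cross (T : pzRingType) (x y z : T * T) : T :=
  (y.1 - x.1) * (z.2 - x.2) - (y.2 - x.2) * (z.1 - x.1).

Definition zsign (b : bool) : Z := if b then 1 else -1.

Definition check_tri (b : bool) (bx by_ bz : bounds) : bool :=
  all (fun x => all (fun y => all (fun z => 0 < zsign b * cross x y z)
    (corners bz)) (corners by_)) (corners bx).

Definition sorted_pairs : seq (nat * nat) :=
  [:: (0,1); (0,2); (0,3); (0,4); (1,2); (1,3); (1,4); (2,3); (2,4); (3,4)]%nat.

Definition pair_at (P : seq pair_data) (u v : nat) : pair_data :=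
  nth ((0, 0), (0, 0, 0, 0), [::]) P (index (minn u v, maxn u v) sorted_pairs).

Definition class_bits (P : seq pair_data) : seq bool :=
  [seq let: (a, b, c) := t in
       0 < cross (pair_witness (pair_at P b c)) (pair_witness (pair_at P a c))
                 (pair_witness (pair_at P a b))
  | t <- sorted_triples].

Definition check_class (cl : polygon_class) : bool :=
  let: (C, M, P) := cl in
  all5 (fun u => all5 (fun v => (u < v)%nat ==>
    check_pair (nth [::] C u) (nth [::] C v) M (pair_at P u v))) &&
  all5 (fun u => all5 (fun v => all5 (fun w => distinctb u v w ==>
    check_tri (bits_pos (class_bits P) u v w) (pair_bounds (pair_at P v w))
      (pair_bounds (pair_at P u w)) (pair_bounds (pair_at P u v))))).

(** * Six certified polygon families *)

Section Data.
Local Open Scope Z_scope.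

Definition class0 : polygon_class :=
  ([:: [:: (-81, -10, -466); (1, -2, 10); (38, -3, 307); (-34, 21, 1795)];
      [:: (-47, -5, -1036); (-88, -123, 4424); (221, 97, 19403); (8, 41, 3589)];
      [:: (-52, -25, 448); (39, -25, 2814); (13, 15, 168)];
      [:: (7, -74, -998); (18, -71, -777); (-5, 29, 522)];
      [:: (-29, -26, 1862); (10, -37, -734); (47, -63, -2119); (-2, 9, 463)]],
   151,
   [:: ((14, 82), (15, -13, 85, -75), [:: (2, 7, 41, 3, 1582); (7, 4, 5, 41, 1887); (7, 4, 47, 8, 1887); (4, 2, 38, 47, 331)]);
      ((7, 2), (9, -4, 7, 2), [:: (2, 6, 15, 3, 609); (6, 0, 10, 15, 1085); (6, 0, 81, 13, 1085); (0, 1, 1, 81, 172)]);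
      ((7, 17), (10, -3, 20, -13), [:: (2, 6, 29, 3, 1087); (6, 0, 10, 29, 2399); (2, 6, 5, 38, 1087); (0, 4, 7, 81, 6064)]);
      ((6, 46), (13, 1, 55, -34), [:: (2, 7, 9, 3, 336); (7, 0, 10, 9, 749); (2, 7, 2, 38, 336); (0, 6, 47, 81, 5573)]);
      ((34, -39), (51, -22, -8, 61), [:: (5, 6, 15, 25, 910); (6, 0, 5, 15, 640); (6, 0, 47, 13, 640); (1, 5, 39, 88, 6997)]);
      ((47, 25), (75, -19, 31, -16), [:: (5, 2, 97, 71, 17437); (6, 0, 5, 29, 1388); (2, 6, 5, 221, 6894); (0, 5, 18, 47, 3427)]);
      ((22, 53), (34, -16, 59, -46), [:: (6, 7, 9, 63, 297); (7, 0, 5, 9, 433); (6, 7, 2, 47, 297); (0, 6, 47, 47, 3196)]);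
      ((-10, 14), (-2, 16, 17, -12), [:: (3, 2, 15, 74, 1067); (5, 0, 25, 29, 1633); (2, 5, 5, 13, 452); (0, 3, 7, 52, 4023)]);
      ((-19, 25), (-13, 24, 32, -20), [:: (5, 2, 15, 63, 1524); (2, 0, 25, 15, 455); (2, 0, 52, 13, 455); (0, 5, 47, 52, 4451)]);
      ((-38, 11), (-27, 58, 14, -8), [:: (5, 2, 29, 63, 1048); (2, 0, 74, 29, 167); (5, 2, 5, 47, 1048); (2, 0, 7, 5, 167)])]).

Definition class1 : polygon_class :=
  ([:: [:: (-111, -157, 7177); (26, -31, 6113); (7, 281, -1537)];
      [:: (7, -61, 196); (1, -3, 28); (-79, 317, 2988)];
      [:: (-161, -6, -3849); (247, -28, 8993); (-43, 17, 423)];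
      [:: (-99, -113, -9086); (53, 26, 6382); (-12, 7, 37)];
      [:: (-105, -83, -15622); (-7, -6, -1062); (80, -11, 14206); (95, 154, 25891)]],
   223,
   [:: ((-45, -6), (-16, 58, -4, 10), [:: (3, 2, 281, 61, 2394); (5, 0, 157, 317, 47590); (2, 5, 79, 7, 24418); (0, 3, 7, 111, 7870)]);
      ((29, -36), (36, -24, -6, 67), [:: (4, 2, 281, 28, 69603); (2, 3, 6, 281, 45199); (2, 3, 161, 7, 45199); (0, 4, 247, 111, 41887)]);
      ((123, -20), (142, -100, -7, 44), [:: (3, 4, 26, 113, 3415); (2, 3, 113, 281, 27028); (2, 3, 99, 7, 27028); (3, 4, 53, 99, 3415)]);
      ((170, -15), (177, -159, -9, 26), [:: (5, 2, 281, 11, 22557); (2, 4, 6, 281, 1925); (2, 4, 7, 7, 1925); (4, 5, 80, 7, 557)]);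
      ((30, 7), (39, -23, 20, 1), [:: (4, 2, 317, 28, 76087); (2, 3, 6, 317, 51511); (4, 2, 79, 247, 76087); (3, 0, 7, 161, 9863)]);
      ((87, 26), (108, -63, 36, -15), [:: (1, 4, 26, 3, 185); (2, 3, 113, 317, 40310); (4, 2, 79, 53, 18855); (3, 1, 1, 99, 410)]);
      ((159, 46), (185, -118, 56, -32), [:: (5, 6, 154, 11, 13365); (2, 4, 6, 317, 2693); (6, 2, 79, 95, 42281); (4, 1, 1, 7, 27)]);
      ((39, 61), (46, -29, 85, -44), [:: (1, 5, 7, 28, 1393); (5, 3, 113, 7, 2049); (1, 5, 12, 247, 1393); (3, 1, 247, 99, 30683)]);
      ((48, 134), (52, -43, 141, -124), [:: (1, 6, 154, 28, 40698); (2, 3, 83, 17, 5354); (6, 2, 43, 95, 8237); (3, 1, 247, 105, 23441)]);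
      ((66, 107), (75, -61, 115, -94), [:: (3, 1, 26, 83, 1669); (2, 3, 83, 7, 1731); (1, 2, 12, 53, 683); (3, 1, 53, 105, 1669)])]).

Definition class2 : polygon_class :=
  ([:: [:: (75, -47, 2631); (213, -98, 5769); (10, -1, 865); (-44, 21, -735)];
      [:: (-295, -34, 22302); (-394, -99, 20301); (689, 133, -26794)];
      [:: (-402, -373, -50116); (79, -22, 22619); (317, 375, 65282); (3, 10, 2308)];
      [:: (-11, -41, 1177); (153, 451, 685); (-21, 41, 935)];
      [:: (-19, -94, -187); (3, -101, -318); (9, 191, 4974); (-8, 15, 1122)]],
   472,
   [:: ((-25, -91), (-21, 28, -82, 99), [:: (0, 6, 133, 47, 42358); (3, 5, 99, 21, 12630); (6, 3, 44, 689, 20321); (5, 0, 75, 394, 25943)]);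
      ((65, 92), (78, -53, 114, -70), [:: (1, 6, 375, 98, 110941); (3, 4, 373, 21, 24854); (6, 3, 44, 317, 23157); (4, 1, 213, 402, 118845)]);
      ((14, -18), (25, -2, -3, 33), [:: (1, 5, 451, 98, 111057); (3, 4, 41, 21, 2035); (5, 3, 44, 153, 23057); (4, 1, 213, 11, 9811)]);
      ((29, 14), (39, -18, 25, -3), [:: (1, 6, 191, 98, 41565); (3, 5, 101, 21, 4381); (6, 3, 44, 9, 8593); (3, 5, 3, 44, 4381)]);
      ((-96, 248), (-81, 106, 263, -222), [:: (3, 2, 133, 373, 203531); (6, 0, 34, 10, 2848); (6, 0, 295, 3, 2848); (3, 2, 689, 402, 203531)]);
      ((-43, -9), (-35, 51, 3, 20), [:: (3, 2, 133, 41, 26786); (5, 1, 99, 41, 18233); (2, 5, 21, 689, 31042); (3, 2, 689, 11, 26786)]);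
      ((-50, 20), (-40, 59, 29, -10), [:: (3, 2, 133, 94, 62239); (5, 1, 99, 191, 74363); (5, 1, 394, 9, 74363); (3, 2, 689, 19, 62239)]);
      ((226, -82), (262, -179, -59, 99), [:: (1, 5, 451, 22, 38995); (5, 0, 373, 451, 124233); (5, 0, 402, 153, 124233); (4, 1, 79, 11, 3481)]);
      ((151, 14), (196, -105, 22, -6), [:: (5, 2, 375, 101, 33142); (6, 0, 373, 191, 73425); (6, 0, 402, 9, 73425); (0, 5, 3, 402, 41721)]);
      ((-16, 6), (-4, 30, 10, -3), [:: (4, 1, 451, 101, 16806); (2, 3, 94, 41, 2753); (1, 2, 21, 153, 15744); (3, 4, 3, 19, 2201)])]).

Definition class3 : polygon_class :=
  ([:: [:: (-164, -3, -3033); (91, -137, -2061); (73, 140, 27835)];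
      [:: (143, -263, 27007); (130, 57, 31658); (-273, 206, -16324)];
      [:: (-62, -111, -9874); (-35, -68, -5873); (40, 57, 6277); (17, 65, 6786)];
      [:: (23, -108, -1693); (29, -108, -2191); (41, -105, -1810); (-31, 107, 3246)];
      [:: (-151, -103, 14021); (169, -18, 301); (-187, 139, 25627)]],
   233,
   [:: ((149, 116), (155, -142, 121, -109), [:: (1, 2, 140, 137, 22741); (5, 1, 137, 206, 18655); (2, 5, 273, 73, 53258); (5, 1, 91, 273, 18655)]);
      ((45, 70), (70, -16, 99, -55), [:: (1, 5, 57, 137, 10667); (5, 0, 3, 57, 9228); (5, 0, 164, 40, 9228); (4, 1, 91, 35, 10983)]);
      ((26, 35), (41, -17, 43, -27), [:: (1, 6, 107, 137, 5490); (6, 0, 3, 107, 17641); (1, 6, 31, 91, 5490); (0, 1, 91, 164, 22741)]);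
      ((18, 171), (22, -15, 191, -133), [:: (4, 2, 140, 18, 24974); (2, 0, 3, 140, 22741); (2, 0, 164, 73, 22741); (0, 4, 169, 164, 3459)]);
      ((103, 35), (127, -90, 45, -21), [:: (4, 5, 57, 68, 725); (2, 4, 68, 206, 25774); (5, 2, 273, 40, 23801); (4, 5, 40, 35, 725)]);
      ((113, 62), (130, -103, 68, -57), [:: (5, 6, 107, 105, 1132); (2, 5, 105, 206, 20219); (5, 6, 31, 41, 1132); (2, 5, 41, 273, 20219)]);
      ((-14, -104), (-7, 21, -89, 112), [:: (4, 2, 206, 18, 29900); (2, 3, 103, 206, 59225); (4, 2, 273, 169, 29900); (3, 0, 143, 151, 54442)]);
      ((78, 50), (86, -69, 54, -47), [:: (6, 2, 57, 105, 6537); (7, 1, 68, 107, 5853); (2, 7, 31, 40, 6047); (1, 6, 41, 35, 6463)]);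
      ((-19, 105), (13, 51, 118, -83), [:: (5, 3, 65, 18, 11291); (6, 0, 111, 139, 29375); (3, 6, 187, 17, 14518); (0, 5, 169, 62, 19875)]);
      ((-52, 10), (6, 95, 32, 4), [:: (5, 3, 107, 18, 17525); (3, 4, 103, 107, 19350); (5, 3, 31, 169, 17525); (4, 0, 23, 151, 18677)])]).

Definition class4 : polygon_class :=
  ([:: [:: (-414, -137, -1486); (115, -237, -8389); (184, 611, 246010)];
      [:: (89, -470, 166371); (183, -91, 91723); (65, -2, 29456); (-727, 575, -134928)];
      [:: (-5, -91, 10924); (226, 159, 36098); (-206, 205, -710)];
      [:: (-2, -101, -4085); (1, -26, -635); (2, 253, 12455); (-1, 256, 11750)];
      [:: (-631, -353, 266428); (403, -40, -17260); (525, 187, 32510); (-350, 123, 165315)]],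
   755,
   [:: ((419, 252), (462, -346, 281, -203), [:: (5, 2, 611, 2, 40083); (6, 1, 237, 575, 106174); (2, 6, 727, 184, 549997); (6, 1, 115, 727, 106174)]);
      ((90, 83), (101, -74, 92, -71), [:: (1, 4, 159, 237, 71847); (5, 1, 237, 205, 25247); (4, 5, 206, 226, 79084); (5, 1, 115, 206, 25247)]);
      ((3, 43), (22, 12, 46, -40), [:: (1, 6, 256, 237, 29203); (6, 0, 137, 256, 106121); (1, 6, 1, 115, 29203); (3, 1, 115, 2, 12089)]);
      ((-72, 304), (-20, 144, 446, -107), [:: (4, 5, 187, 40, 96361); (2, 0, 137, 611, 227746); (2, 0, 414, 184, 227746); (0, 4, 403, 414, 71771)]);
      ((171, -92), (254, -86, -17, 134), [:: (4, 5, 159, 91, 19771); (3, 4, 91, 575, 69032); (5, 3, 727, 226, 245543); (4, 5, 226, 5, 19771)]);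
      ((317, 42), (455, -214, 47, -35), [:: (2, 6, 253, 2, 16449); (3, 4, 101, 575, 74577); (6, 7, 1, 2, 765); (4, 5, 1, 2, 153)]);
      ((-89, -358), (-75, 111, -330, 375), [:: (5, 3, 575, 40, 202645); (3, 0, 470, 575, 290515); (5, 3, 727, 403, 202645); (3, 0, 89, 727, 290515)]);
      ((88, 42), (134, -42, 47, -37), [:: (3, 1, 159, 101, 22508); (2, 3, 101, 205, 21216); (1, 6, 1, 226, 58015); (3, 1, 226, 2, 22508)]);
      ((-71, -94), (-47, 110, -51, 118), [:: (4, 2, 205, 40, 74375); (2, 0, 91, 205, 19771); (4, 2, 206, 403, 74375); (0, 4, 403, 5, 36873)]);
      ((-102, 44), (-38, 230, 46, -41), [:: (5, 3, 256, 40, 103128); (3, 0, 101, 256, 613); (5, 3, 1, 403, 103128); (0, 5, 403, 2, 40783)])]).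

Definition class5 : polygon_class :=
  ([:: [:: (-138, -101, -7589); (-19, -50, 435); (419, -40, 145805); (-4, 41, 10103)];
      [:: (-133, -407, 9719); (31, 41, 3175); (10, 71, 562)];
      [:: (65, -64, -901); (175, -137, -4403); (121, -57, 1445); (-361, 258, 16795)];
      [:: (-57, -29, 3613); (1, -3, -109); (279, 2, -5241); (-182, 107, 36885)];
      [:: (-48, -7, 7287); (-215, -36, 30563); (773, -1, -84059); (-20, 29, 18835)]],
   575,
   [:: ((120, -36), (230, -54, 1, 96), [:: (1, 5, 41, 50, 771); (6, 0, 101, 71, 8788); (6, 0, 138, 10, 8788); (1, 5, 31, 19, 771)]);
      ((53, 121), (125, -3, 240, -52), [:: (6, 7, 258, 57, 10641); (7, 0, 101, 258, 72065); (6, 7, 361, 121, 10641); (0, 5, 175, 138, 36581)]);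
      ((-47, 195), (-19, 88, 245, -101), [:: (0, 6, 2, 101, 27903); (7, 0, 101, 107, 33148); (6, 3, 4, 279, 11447); (0, 6, 279, 138, 27903)]);
      ((-111, 231), (-108, 117, 236, -223), [:: (6, 3, 41, 1, 31689); (3, 0, 101, 41, 6062); (6, 3, 4, 773, 31689); (0, 6, 773, 138, 78211)]);
      ((-35, 1), (-17, 52, 14, 13), [:: (4, 2, 71, 137, 13795); (6, 0, 407, 258, 181241); (2, 6, 361, 10, 28211); (0, 4, 175, 133, 89446)]);
      ((-68, 16), (-59, 73, 19, -13), [:: (4, 2, 71, 3, 101); (2, 3, 29, 71, 3757); (2, 3, 57, 10, 3757); (3, 4, 1, 57, 200)]);
      ((-128, 22), (-108, 147, 29, -11), [:: (5, 2, 71, 1, 54893); (2, 4, 36, 71, 14905); (2, 4, 215, 10, 14905); (0, 5, 773, 133, 314744)]);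
      ((-22, 32), (-19, 27, 39, -27), [:: (5, 6, 2, 3, 839); (3, 5, 3, 258, 825); (6, 3, 361, 279, 72704); (3, 5, 1, 361, 825)]);
      ((-116, -101), (-108, 125, -87, 112), [:: (6, 3, 258, 1, 199073); (3, 5, 36, 258, 68466); (6, 3, 361, 773, 199073); (5, 0, 65, 215, 16100)]);
      ((-115, 125), (-108, 128, 161, -88), [:: (6, 3, 107, 1, 82529); (3, 0, 29, 107, 11377); (6, 3, 182, 773, 82529); (0, 6, 773, 57, 22474)])]).

End Data.

Definition classes : seq polygon_class := [:: class0; class1; class2; class3; class4; class5].

Lemma classes_ok : all check_class classes.
Proof. by vm_compute. Qed.

Definition class_relabellings : seq (seq bool) :=
  [seq relabel (class_bits cl.2) s | cl <- classes, s <- permutations (iota 0 5)].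

Lemma interior_bits_classified :
  all (fun bs => interior_bits bs ==> (bs \in class_relabellings)) (bitseqs 10).
Proof. by vm_compute. Qed.

(** * Realizations *)

Section Realization.
Variable R : realType.

Definition realizes (V : eqType) (K : V -> set (R * R)) (o : V -> V -> V -> int) : Prop :=
  holey K /\ forall u v w, distinct3 u v w -> family_orient_is (K u) (K v) (K w) (o u v w).

Definition zR (z : Z) : R := (int_of_Z z)%:~R.
HB.instance Definition _ := GRing.RMorphism.copy zR (intr \o int_of_Z)%FUN.
Arguments zR : simpl never.

Definition zpt (w : Z * Z) : R * R := (zR w.1, zR w.2).

Lemma ler_zR (a b : Z) : (zR a <= zR b) = (a <= b).
Proof. by rewrite ler_int; apply/idP/idP; lia. Qed.

Lemma ltr_zR (a b : Z) : (zR a < zR b) = (a < b).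
Proof. by rewrite ltr_int; apply/idP/idP; lia. Qed.

Lemma zR_cross (x y z : Z * Z) : zR (cross x y z) = cross (zpt x) (zpt y) (zpt z).
Proof. by rewrite /cross !(rmorphB, rmorphM). Qed.

Definition halfplane (a b t : R) : set (R * R) := [set p | a * p.1 + b * p.2 <= t].

Lemma convex_halfplane a b t : convex_plane (halfplane a b t).
Proof.
rewrite /halfplane => x y /= Hx Hy s /andP[s0 s1].
have -> : a * ((1 - s) * x.1 + s * y.1) + b * ((1 - s) * x.2 + s * y.2) =
  (1 - s) * (a * x.1 + b * x.2) + s * (a * y.1 + b * y.2) by ring.
apply: (@le_trans _ _ ((1 - s) * t + s * t)); last by rewrite -mulrDl subrK mul1r.
by apply: lerD; apply: ler_wpM2l; rewrite ?subr_ge0.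
Qed.

Lemma closed_halfplane a b t : closed (halfplane a b t).
Proof.
apply: (@preimage_closed _ _ _ [set r : R | r <= t]); last exact: closed_le.
move=> p _; apply: cvgD; apply: cvgM;
  [exact: cvg_cst | exact: cvg_fst | exact: cvg_cst | exact: cvg_snd].
Qed.

Definition zhalfplane (c : constraint) : set (R * R) := halfplane (zR c.1.1) (zR c.1.2) (zR c.2).

Definition polyhedron (cs : seq constraint) : set (R * R) :=
  [set p | forall c, c \in cs -> zhalfplane c p].

Definition polygon (cs : seq constraint) (M : Z) : set (R * R) :=
  polyhedron (bound_constraints (M, M, M, M) ++ cs).

Definition box (bd : bounds) : set (R * R) := polyhedron (bound_constraints bd).

Lemma zhalfplane_zpt c w : sat c w -> zhalfplane c (zpt w).
Proof. by rewrite /sat -ler_zR rmorphD !rmorphM. Qed.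

Lemma convex_polyhedron cs : convex_plane (polyhedron cs).
Proof.
move=> x y Px Py t t01 c cs_c.
exact: convex_halfplane (Px c cs_c) (Py c cs_c) t t01.
Qed.

Lemma closed_polyhedron cs : closed (polyhedron cs).
Proof.
have -> : polyhedron cs = \bigcap_(c in [set c | c \in cs]) zhalfplane c.
  by apply/seteqP; split=> p Pp c /Pp.
by apply: closed_bigI => c _; apply: closed_halfplane.
Qed.

Lemma box_bounds t1 t2 t3 t4 p : box (t1, t2, t3, t4) p ->
  - zR t2 <= p.1 <= zR t1 /\ - zR t4 <= p.2 <= zR t3.
Proof.
move=> Bp; have B a b t : (a, b, t) \in bound_constraints (t1, t2, t3, t4) ->
    zR a * p.1 + zR b * p.2 <= zR t by apply: Bp.
have := B 1 0 t1; have := B (-1) 0 t2; have := B 0 1 t3; have := B 0 (-1) t4.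
rewrite !inE !eqxx ?orbT !rmorphN !rmorph1 !rmorph0 !mul0r !mulN1r !mul1r !addr0 !add0r.
by rewrite (lerNl (zR t2)) (lerNl (zR t4)) => /(_ isT) -> /(_ isT) -> /(_ isT) -> /(_ isT) ->.
Qed.

Lemma compact_box bd : compact (box bd).
Proof.
case: bd => [[[t1 t2] t3] t4].
apply: (subclosed_compact (@closed_polyhedron _)
  (compact_setX (@segment_compact R (- zR t2) (zR t1)) (@segment_compact R (- zR t4) (zR t3)))).
by move=> p /box_bounds[x_in y_in]; split; rewrite /= in_itv.
Qed.

Lemma compact_polygon cs M : compact (polygon cs M).
Proof.
apply: (subclosed_compact (@closed_polyhedron _) (@compact_box (M, M, M, M))) => p Pp c c_sq.
by apply: Pp; rewrite mem_cat c_sq.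
Qed.

Lemma polyhedron_nth cs p i : polyhedron cs p -> zhalfplane (nth (0, 0, 0) cs i) p.
Proof.
move=> Pp; have [i_lt | i_ge] := ltnP i (size cs); first by apply: Pp; rewrite mem_nth.
by rewrite nth_default // /zhalfplane /halfplane /= !rmorph0 !mul0r addr0.
Qed.

Lemma cert_ok_sound cs e ct p : cert_ok cs e ct -> polyhedron cs p -> zhalfplane e p.
Proof.
case: ct => [[[[i j] l] m] k] /= + Pp.
have := polyhedron_nth (Z.to_nat i) Pp; have := polyhedron_nth (Z.to_nat j) Pp.
move: (nth _ cs (Z.to_nat i)) (nth _ cs (Z.to_nat j)) => ci cj Hj Hi.
case/and5P=> l_ge0 m_ge0 k_gt0 /eqP/(congr1 zR) e1 /andP[/eqP/(congr1 zR) e2 t_le].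
rewrite -ler_zR in t_le; rewrite !(rmorphD, rmorphM) in e1 e2 t_le.
have [l0 m0 k0] : [/\ 0 <= zR l, 0 <= zR m & 0 < zR k].
  by rewrite -(rmorph0 zR) !ler_zR ltr_zR.
rewrite /zhalfplane /halfplane /= -(ler_pM2l k0); apply: le_trans t_le.
have -> : zR k * (zR e.1.1 * p.1 + zR e.1.2 * p.2) =
    zR l * (zR ci.1.1 * p.1 + zR ci.1.2 * p.2) + zR m * (zR cj.1.1 * p.1 + zR cj.1.2 * p.2).
  by rewrite mulrDr !mulrA -e1 -e2; ring.
by apply: lerD; apply: ler_wpM2l.
Qed.

Lemma certs_sound cs es cts p : all2 (cert_ok cs) es cts -> polyhedron cs p -> polyhedron es p.
Proof.
move=> + Pp; elim: es cts => [|e es IHes] [|ct cts] //= /andP[e_ok es_ok] c.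
by rewrite inE => /predU1P[-> | /(IHes _ es_ok)//]; apply: cert_ok_sound e_ok Pp.
Qed.

Lemma check_pair_sound cu cv M pd : check_pair cu cv M pd ->
  (polygon cu M `&` polygon cv M) (zpt (pair_witness pd)) /\
  polygon cu M `&` polygon cv M `<=` box (pair_bounds pd).
Proof.
case/and3P=> /allP wu /allP wv certs.
split; first by split=> c c_in; apply: zhalfplane_zpt; [apply: wu | apply: wv].
move=> p [Pu Pv]; apply: certs_sound certs _ => c.
by rewrite !mem_cat => /orP[c_u | c_v]; [apply: Pu | apply: Pv]; rewrite mem_cat ?c_u ?c_v orbT.
Qed.

Lemma affine_pos_segment (a b lo hi t : R) :
  lo <= t <= hi -> 0 < a + b * lo -> 0 < a + b * hi -> 0 < a + b * t.
Proof.
case/andP=> lo_t t_hi; have [b0 | b0] := lerP 0 b => pos_lo pos_hi.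
  by apply: (lt_le_trans pos_lo); rewrite lerD2l ler_wpM2l.
by apply: (lt_le_trans pos_hi); rewrite lerD2l ler_wnM2l // ltW.
Qed.

Lemma affine_pos_box (a b c : R) bd p : box bd p ->
  (forall w, w \in corners bd -> 0 < a + b * (zpt w).1 + c * (zpt w).2) ->
  0 < a + b * p.1 + c * p.2.
Proof.
case: bd => [[[t1 t2] t3] t4] /box_bounds[x_in y_in] pos.
have edge y : (- t2, y) \in corners (t1, t2, t3, t4) -> (t1, y) \in corners (t1, t2, t3, t4) ->
    0 < a + b * p.1 + c * zR y.
  move=> /pos lo /pos hi; rewrite addrAC; apply: (affine_pos_segment x_in).
    by rewrite addrAC -rmorphN.
  by rewrite addrAC.
apply: (affine_pos_segment y_in); rewrite -?rmorphN; apply: edge; by rewrite !inE eqxx ?orbT.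
Qed.

Lemma cross_same (T : pzRingType) (x : T * T) : cross x x x = 0.
Proof. by rewrite /cross !subrr. Qed.

Lemma cross_cycle (T : comPzRingType) (x y z : T * T) : cross x y z = cross y z x.
Proof. by rewrite /cross; ring. Qed.

Lemma cross_pos_box (s : R) x y bd z : box bd z ->
  (forall w, w \in corners bd -> 0 < s * cross x y (zpt w)) -> 0 < s * cross x y z.
Proof.
have E q : s * cross x y q =
    s * (x.1 * y.2 - x.2 * y.1) + s * (x.2 - y.2) * q.1 + s * (y.1 - x.1) * q.2.
  by rewrite /cross; ring.
by move=> Bz pos; rewrite E; apply: affine_pos_box Bz _ => w /pos; rewrite E.
Qed.

(* The cross product is affine in each vertex, so its sign on a product of boxes
   is decided at the corners. *)
Lemma cross_pos_boxes (s : R) bx by_ bz x y z : box bx x -> box by_ y -> box bz z ->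
  (forall u v w, u \in corners bx -> v \in corners by_ -> w \in corners bz ->
     0 < s * cross (zpt u) (zpt v) (zpt w)) ->
  0 < s * cross x y z.
Proof.
move=> Bx By Bz pos.
have pos_z u v : u \in corners bx -> v \in corners by_ -> 0 < s * cross (zpt u) (zpt v) z.
  by move=> ux vy; apply: cross_pos_box Bz _ => w; apply: pos.
have pos_yz u : u \in corners bx -> 0 < s * cross (zpt u) y z.
  move=> ux; rewrite -cross_cycle; apply: cross_pos_box By _ => v vy.
  by rewrite cross_cycle; apply: pos_z.
rewrite cross_cycle; apply: cross_pos_box Bx _ => u ux.
by rewrite -cross_cycle; apply: pos_yz.
Qed.

Lemma check_tri_sound b bx by_ bz x y z : check_tri b bx by_ bz ->
  box bx x -> box by_ y -> box bz z -> 0 < zR (zsign b) * cross x y z.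
Proof.
move=> ok Bx By Bz; apply: cross_pos_boxes Bx By Bz _ => u v w ux vy wz.
move/allP/(_ u ux)/allP/(_ v vy)/allP/(_ w wz): ok.
by rewrite -zR_cross -rmorphM -(rmorph0 zR) ltr_zR.
Qed.

Lemma orient_of_sign (b : bool) x y z :
  0 < zR (zsign b) * cross x y z -> orient x y z = (if b then 1 else -1).
Proof.
rewrite /orient -/(cross x y z) /zsign; case: b.
  by rewrite rmorph1 mul1r => /gtr0_sgz.
by rewrite rmorphN1 mulN1r oppr_gt0 => /ltr0_sgz.
Qed.

Definition class_polygons (cl : polygon_class) (a : 'I_5) : set (R * R) :=
  polygon (nth [::] cl.1.1 a) cl.1.2.

Lemma pair_atC P u v : pair_at P u v = pair_at P v u.
Proof. by rewrite /pair_at minnC maxnC. Qed.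

Lemma class_pair cl (u v : 'I_5) : check_class cl -> u != v ->
  (class_polygons cl u `&` class_polygons cl v) (zpt (pair_witness (pair_at cl.2 u v))) /\
  class_polygons cl u `&` class_polygons cl v `<=` box (pair_bounds (pair_at cl.2 u v)).
Proof.
move=> ok; wlog uv : u v / (u < v)%nat => [W | _].
  rewrite neq_ltn => /orP[uv | vu]; first by apply: W; rewrite // neq_ltn uv.
  by rewrite pair_atC setIC; apply: W; [exact: vu | rewrite neq_ltn vu].
case: cl ok => [[C M] P] /andP[pairs_ok _]; apply: check_pair_sound.
by move/all5P/(_ u)/all5P/(_ v)/implyP: pairs_ok; apply.
Qed.

Lemma class_realizes cl : check_class cl ->
  realizes (class_polygons cl) (fun a b c => orient_of_bits (class_bits cl.2) a b c).
Proof.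
move=> ok; set K := class_polygons cl.
have sign_pos (u v w : 'I_5) x y z : distinct3 u v w ->
    (K v `&` K w) x -> (K u `&` K w) y -> (K u `&` K v) z ->
    0 < zR (zsign (bits_pos (class_bits cl.2) u v w)) * cross x y z.
  case=> uv vw uw Bx By Bz.
  apply: check_tri_sound; [|exact: (class_pair ok vw).2 | exact: (class_pair ok uw).2
                          | exact: (class_pair ok uv).2].
  case: cl ok {K Bx By Bz} => [[C M] P] /andP[_ /all5_triples/(_ u v w)/implyP]; apply.
  by apply/distinct3_ord.
split; [split | ].
- by move=> a; split; [apply: compact_polygon | apply: convex_polyhedron].
- by move=> u v uv; exists (zpt (pair_witness (pair_at cl.2 u v))); apply: (class_pair ok uv).1.
- move=> u v w uvw; apply/seteqP; split=> // p [[Kup Kvp] Kwp].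
  have := sign_pos _ _ _ p p p uvw (conj Kvp Kwp) (conj Kup Kwp) (conj Kup Kvp).
  by rewrite cross_same mulr0 ltxx.
- by move=> u v w uvw x y z Bx By Bz; apply/orient_of_sign/sign_pos.
Qed.

Lemma distinct3_inj (V W : eqType) (h : V -> W) u v w :
  injective h -> distinct3 u v w -> distinct3 (h u) (h v) (h w).
Proof. by move=> /inj_eq hE [uv vw uw]; split; rewrite hE. Qed.

Lemma realizes_comp (V W : eqType) (h : V -> W) (K : W -> set (R * R)) o o' :
  injective h -> (forall u v w, distinct3 u v w -> o u v w = o' (h u) (h v) (h w)) ->
  realizes K o' -> realizes (K \o h) o.
Proof.
move=> h_inj oE [[K_cc K_meet K_holes] K_o]; split; [split | ].
- by move=> v; apply: K_cc.
- by move=> u v uv; apply: K_meet; rewrite (inj_eq h_inj).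
- by move=> u v w /(distinct3_inj h_inj); apply: K_holes.
- by move=> u v w uvw; rewrite oE //; apply/K_o/distinct3_inj.
Qed.

End Realization.

Lemma total_3order_comp (V W : eqType) (f : W -> V) (o : V -> V -> V -> int) :
  injective f -> total_3order o -> total_3order (fun a b c => o (f a) (f b) (f c)).
Proof.
move=> f_inj [o_alt o_int]; split=> [a b c abc | a b c d abc ad bd cd].
  exact/o_alt/distinct3_inj.
by apply: o_int; rewrite ?(inj_eq f_inj) //; apply: distinct3_inj.
Qed.

Lemma perm_iota_ord n (s : seq nat) : perm_eq s (iota 0 n) ->
  exists2 h : 'I_n -> 'I_n, injective h & forall a, val (h a) = nth 0%nat s a.
Proof.
move=> s_perm; have size_s : size s = n by rewrite (perm_size s_perm) size_iota.
have s_lt (a : 'I_n) : (nth 0 s a < n)%nat.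
  have a_s : (a < size s)%nat by rewrite size_s.
  by move: (mem_nth 0%nat a_s); rewrite (perm_mem s_perm) mem_iota.
exists (fun a => Ordinal (s_lt a)) => // a b /(congr1 val)/eqP /=.
by rewrite nth_uniq ?size_s ?(perm_uniq s_perm) ?iota_uniq // => /eqP/val_inj.
Qed.

Definition orientation_bits (o : 'I_5 -> 'I_5 -> 'I_5 -> int) : seq bool :=
  bits_of (fun a b c => o (inord a) (inord b) (inord c) == 1).

Lemma bits_pos_orientation o (a b c : 'I_5) : total_orientation o -> distinct3 a b c ->
  bits_pos (orientation_bits o) a b c = (o a b c == 1).
Proof.
move=> o_alt abc; rewrite bits_pos_bits_of ?inord_val // => x y z /o_alt[o_pm [o1 o2 o3 o4 o5]].
have flip (i j : int) : i = 1 \/ i = -1 -> i = - j -> (i == 1) = ~~ (j == 1).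
  by move=> i_pm ij; apply/idP/idP; lia.
rewrite !inord_val; split; [by rewrite o1 | by rewrite o2 | exact: flip..].
Qed.

Lemma orient_of_orientation_bits o (a b c : 'I_5) : total_orientation o -> distinct3 a b c ->
  o a b c = orient_of_bits (orientation_bits o) a b c.
Proof.
move=> o_alt abc; rewrite /orient_of_bits bits_pos_orientation //.
by have [[] -> _] := o_alt a b c abc.
Qed.

Lemma interior_orientation_bits o : total_3order o -> interior_bits (orientation_bits o).
Proof.
move=> [o_alt o_int]; apply/all5P => a; apply/all5P => b; apply/all5P => c; apply/all5P => d.
apply/implyP => /and4P[/distinct3_ord[ab bc ac] ad bd cd].
have [abc abd bcd cad] : [/\ distinct3 a b c, distinct3 a b d, distinct3 b c d & distinct3 c a d].
  by split; split; rewrite // eq_sym.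
rewrite !bits_pos_orientation //.
apply/implyP => /and3P[/eqP abd1 /eqP bcd1 /eqP cad1]; apply/eqP.
exact: o_int abc ad bd cd abd1 bcd1 cad1.
Qed.

Lemma realizable_ord5 (R : realType) (o : 'I_5 -> 'I_5 -> 'I_5 -> int) : total_3order o ->
  exists K : 'I_5 -> set (R * R), realizes K o.
Proof.
move=> [o_alt o_int]; have : orientation_bits o \in class_relabellings.
  have bits10 : size (orientation_bits o) = 10%nat by rewrite size_map.
  move/allP/(_ (orientation_bits o)): interior_bits_classified.
  by rewrite -bits10 mem_bitseqs interior_orientation_bits //; apply.
case/allpairsP => -[cl s] [cl_in s_perm bitsE]; rewrite mem_permutations in s_perm.
have [h h_inj hE] := perm_iota_ord s_perm.
exists (@class_polygons R cl \o h).
apply: (realizes_comp h_inj _ (@class_realizes R cl (allP classes_ok cl cl_in))) => a b c abc.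
rewrite (orient_of_orientation_bits o_alt abc) bitsE /orient_of_bits /relabel bits_pos_bits_of //.
  by rewrite -!hE.
by move=> x y z xyz; rewrite -!hE; apply/bits_pos_alternating/distinct3_inj.
Qed.

Theorem claim4 (R : realType) (V : finType) (hV : #|V| = 5%N)
  (o : V -> V -> V -> int) (ho : total_3order o) :
  exists K : V -> set (R * R),
    holey K /\
    forall u v w, distinct3 u v w -> family_orient_is (K u) (K v) (K w) (o u v w).
Proof.
pose f (a : 'I_5) : V := enum_val (cast_ord (esym hV) a).
pose g (v : V) : 'I_5 := cast_ord hV (enum_rank v).
have gK : cancel g f by move=> v; rewrite /f /g cast_ordK enum_rankK.
have f_inj : injective f by move=> a b /enum_val_inj/cast_ord_inj.
have [K K_o] := realizable_ord5 R (total_3order_comp f_inj ho).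
exists (K \o g); apply: realizes_comp (can_inj gK) _ K_o => u v w _.
by rewrite !gK.
Qed.
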